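(* Let $(X,S)$ be an association scheme and fix $x\in X$. Then $\mathbb{Q}T(x)\cap \mathrm{M}_X(\mathbb{Z})=\mathbb{Z}T(x)$ (intersection taken inside $\mathrm{M}_X(\mathbb{Q})$) if and only if $\dim_{\mathbb{C}}\mathbb{C}T(x)=\dim_K KT(x)$ for every field $K$.
   Context: An association scheme $(X,S)$ consists of a finite set $X$ and a partition $S$ of $X\times X$ such that: (1) $1:=\{(x,x)\mid x\in X\}\in S$; (2) for $s\in S$, $s^*:=\{(y,x)\mid (x,y)\in s\}\in S$; (3) for $s,t,u\in S$ there is a nonnegative integer $p_{st}^u$ with $p_{st}^u=|xs\cap ty|$ whenever $(x,y)\in u$, where $xs=\{y\mid (x,y)\in s\}$ and $ty=\{z\mid (z,y)\in t\}$. For $s\subseteq X\times X$ the adjacency matrix $\sigma_s$ has $(y,z)$-entry $1$ if $(y,z)\in s$ and $0$ otherwise. Fix $x\in X$; for $s\in S$ let $E_s^*$ be the diagonal $0/1$ matrix indexed by $X$ whose $(y,y)$-entry is $1$ iff $y\in xs$. For a commutative ring $R$ with $1$, regard $\sigma_s,E_s^*$ as elements of $\mathrm{M}_X(R)$ (the ring of matrices over $R$ with rows and columns indexed by $X$); the Terwilliger algebra $RT(x)$ is the $R$-subalgebra of $\mathrm{M}_X(R)$ generated by $\{E_s^*\sigma_tE_u^*\mid s,t,u\in S\}$. In particular $\mathbb{Z}T(x)\subseteq \mathrm{M}_X(\mathbb{Z})$ and $\mathbb{Q}T(x)\subseteq\mathrm{M}_X(\mathbb{Q})$. *)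

From HB Require Import structures.
From mathcomp Require Import all_boot all_order all_algebra.
From mathcomp Require Import reals Rstruct complex.
Set Implicit Arguments. Unset Strict Implicit. Unset Printing Implicit Defensive.
Import GRing.Theory Num.Theory.
Local Open Scope ring_scope.

Definition Ccomplex : fieldType := (Rdefinitions.R)[i].

Section Scheme.
Variable X : finType.

Definition diag_rel : {set X * X} := [set p | p.1 == p.2].
Definition transp_rel (s : {set X * X}) : {set X * X} := [set p | (p.2, p.1) \in s].

Definition is_assoc_scheme (S : {set {set X * X}}) : Prop :=
  [/\ partition S [set: X * X],
      diag_rel \in S,
      (forall s, s \in S -> transp_rel s \in S) &
      (forall s t u, s \in S -> t \in S -> u \in S ->
         exists p : nat, forall y z, (y, z) \in u ->
           #|[set w | ((y, w) \in s) && ((w, z) \in t)]| = p)].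

(* Matrices indexed by X are represented as 'M_#|X|, row/column i
   corresponding to the element enum_val i of X. *)
Definition adjmx (R : pzRingType) (s : {set X * X}) : 'M[R]_#|X| :=
  \matrix_(i, j) (((enum_val i, enum_val j) \in s) : nat)%:R.

Definition Estar (R : pzRingType) (x : X) (s : {set X * X}) : 'M[R]_#|X| :=
  \matrix_(i, j) (((i == j) && ((x, enum_val i) \in s)) : nat)%:R.

End Scheme.

Inductive in_subalg (R : comNzRingType) (n : nat) (G : 'M[R]_n -> Prop)
  : 'M[R]_n -> Prop :=
| subalg_gen A : G A -> in_subalg G A
| subalg_one : in_subalg G 1%:M
| subalg_add A B : in_subalg G A -> in_subalg G B -> in_subalg G (A + B)
| subalg_scale (a : R) A : in_subalg G A -> in_subalg G (a *: A)
| subalg_mul A B : in_subalg G A -> in_subalg G B -> in_subalg G (A *m B).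

Definition terw_gens (R : comNzRingType) (X : finType) (S : {set {set X * X}})
  (x : X) (A : 'M[R]_#|X|) : Prop :=
  exists s t u, [/\ s \in S, t \in S, u \in S &
                    A = Estar R x s *m adjmx R t *m Estar R x u].

Arguments terw_gens R {X} S x A.

Definition terwilliger (R : comNzRingType) (X : finType) (S : {set {set X * X}})
  (x : X) : 'M[R]_#|X| -> Prop :=
  in_subalg (@terw_gens R X S x).
Arguments terwilliger R {X} S x.

Definition has_dim (K : fieldType) (n : nat) (P : 'M[K]_n -> Prop) (d : nat) : Prop :=
  exists U : {vspace 'M[K]_n}, (forall A, A \in U <-> P A) /\ \dim U = d.

From HB Require Import structures.
From mathcomp Require Import all_boot all_order all_algebra.
From mathcomp Require Import Rstruct complex.
From Stdlib Require Import Classical.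
Set Implicit Arguments. Unset Strict Implicit. Unset Printing Implicit Defensive.
Import Order.TTheory GRing.Theory Num.Theory.
Local Open Scope ring_scope.

(* The integral algebra ZT(x) is a Z-submodule of Z^(X*X), hence finitely
   generated, and the Smith normal form presents it as the row lattice of D U
   with D = diag(d) and U unimodular.  Since RT(x) is generated by images of
   integer matrices, RT(x) is the R-row space of D U for every commutative
   ring R.  Hence QT(x) meets M_X(Z) in the lattice spanned by the rows e_j U
   with d_j <> 0, which is ZT(x) iff every nonzero d_j is a unit; and
   dim_K KT(x) counts the d_j that are nonzero in K, which is independent of K
   iff again every d_j lies in {-1, 0, 1}: a prime dividing some other d_j
   lowers the dimension over F_p. *)

Definition rowspan (R : pzRingType) m n (M : 'M[R]_(m, n)) (v : 'rV[R]_n) : Prop :=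
  exists c : 'rV_m, v = c *m M.

Section RowSpan.
Variables (R : pzRingType) (m n : nat) (M : 'M[R]_(m, n)).

Lemma rowspan0 : rowspan M 0.
Proof. by exists 0; rewrite mul0mx. Qed.

Lemma rowspanD u v : rowspan M u -> rowspan M v -> rowspan M (u + v).
Proof. by move=> [c ->] [c' ->]; exists (c + c'); rewrite mulmxDl. Qed.

Lemma rowspanZ a v : rowspan M v -> rowspan M (a *: v).
Proof. by move=> [c ->]; exists (a *: c); rewrite scalemxAl. Qed.

Lemma rowspan_sum (I : Type) (r : seq I) (P : pred I) (F : I -> 'rV_n) :
  (forall i, P i -> rowspan M (F i)) -> rowspan M (\sum_(i <- r | P i) F i).
Proof. by move=> MF; apply: big_ind => //; [apply: rowspan0 | apply: rowspanD]. Qed.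

Lemma rowspan_mulmx p (A : 'M_(p, m)) v : rowspan (A *m M) v -> rowspan M v.
Proof. by move=> [c ->]; exists (c *m A); rewrite mulmxA. Qed.

End RowSpan.

Definition int_submod n (P : 'rV[int]_n -> Prop) : Prop :=
  [/\ P 0, forall u v, P u -> P v -> P (u + v) & forall (a : int) v, P v -> P (a *: v)].

Lemma int_ideal_principal (I : int -> Prop) :
  I 0 -> (forall a b, I a -> I b -> I (a + b)) -> (forall c a, I a -> I (c * a)) ->
  exists2 g, I g & forall a, I a -> (g %| a)%Z.
Proof.
move=> I0 ID IM.
have [[a Ia nz_a] | no_nz] := classic (exists2 a, I a & a != 0); last first.
  exists 0 => // a Ia; rewrite dvd0z; apply/negPn/negP => nz_a.
  by case: no_nz; exists a.
have [m le_am] : exists m, (absz a <= m)%N by exists (absz a).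
elim: m => [|m IHm] in a Ia nz_a le_am *.
  by move: le_am; rewrite leqn0 absz_eq0 (negPf nz_a).
have [dvd_a | ] := classic (forall b, I b -> (a %| b)%Z); first by exists a.
move=> /not_all_ex_not[b /(@imply_to_and (I b))[Ib not_dvd]].
have Ir : I (b %% a)%Z.
  have -> : (b %% a)%Z = b + (- (b %/ a)%Z) * a.
    by rewrite {2}(divz_eq b a) mulNr addrAC subrr add0r.
  by apply: ID => //; apply: IM.
apply: (IHm _ Ir); first by apply: contra_notN not_dvd => /eqP /dvdz_mod0P.
rewrite -ltnS (leq_trans _ le_am) // -ltz_nat !abszE ger0_norm ?modz_ge0 //.
exact: ltz_mod.
Qed.

Lemma row_mx0_rsubmx (R : pzRingType) n (v : 'rV[R]_(1 + n)) :
  v ord0 ord0 = 0 -> row_mx 0 (rsubmx v) = v.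
Proof.
move=> v0; rewrite -[RHS]hsubmxK; congr row_mx; apply/matrixP => i j.
by rewrite !ord1 !mxE -v0; congr (v _ _); apply: val_inj.
Qed.

Lemma int_submod_fin_gen n (P : 'rV[int]_n -> Prop) :
  int_submod P -> exists k (M : 'M[int]_(k, n)), forall v, P v <-> rowspan M v.
Proof.
elim: n P => [|n IHn] P [P0 PD PZ].
  exists 0%N, 0 => v; rewrite thinmx0; split=> // _.
  by exists 0; rewrite mulmx0.
have /IHn[k [M HM]] : int_submod (fun w => P (row_mx (0 : 'rV_1) w)).
  split; first by rewrite row_mx0.
    by move=> u w Pu Pw; rewrite -[0]addr0 -add_row_mx; apply: PD.
  by move=> a w Pw; rewrite -(scaler0 _ a) -scale_row_mx; apply: PZ.
pose I a := exists2 v, P v & v ord0 ord0 = a.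
have [g [v0 Pv0 <-] dvd_g] : exists2 g, I g & forall a, I a -> (g %| a)%Z.
  apply: int_ideal_principal.
  - by exists 0; rewrite ?mxE.
  - by move=> _ _ [u Pu <-] [w Pw <-]; exists (u + w); rewrite ?mxE; auto.
  - by move=> c _ [u Pu <-]; exists (c *: u); rewrite ?mxE; auto.
exists (1 + k)%N, (col_mx v0 (row_mx (0 : 'cV_k) M) : 'M_(1 + k, 1 + n)) => v; split.
  move=> Pv; set q := (v ord0 ord0 %/ v0 ord0 ord0)%Z.
  have Pw : P (v - q *: v0) by rewrite -scaleNr; apply: PD => //; apply: PZ.
  have w0 : (v - q *: v0) ord0 ord0 = 0.
    by rewrite !mxE divzK ?subrr //; apply: dvd_g; exists v.
  have [c Hc] := (HM _).1 (eq_ind_r P Pw (row_mx0_rsubmx w0)).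
  exists (row_mx q%:M c).
  rewrite mul_row_col mul_scalar_mx (mul_mx_row c (0 : 'cV_k)) mulmx0.
  by rewrite -Hc row_mx0_rsubmx // addrC subrK.
move=> [c ->]; rewrite -[c]hsubmxK mul_row_col.
rewrite (mul_mx_row (rsubmx c) (0 : 'cV_k)) mulmx0.
rewrite [lsubmx _]mx11_scalar mul_scalar_mx; apply: PD; first exact: PZ.
by apply/HM; exists (rsubmx c).
Qed.

Lemma int_rowspan_smith k n (M : 'M[int]_(k, n)) :
  exists d (R0 : 'M[int]_n), R0 \in unitmx /\
    forall v, rowspan M v <-> rowspan (diag_mx d *m R0) v.
Proof.
have [L uL [R0 uR0 [s _ defM]]] := int_Smith_normal_form M.
set D := \matrix_(i, j) _ in defM.
pose d : 'rV[int]_n := \row_j (s`_j *+ (j < k)%N).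
have defD : D = pid_mx k *m diag_mx d.
  apply/matrixP => i j; rewrite mul_mx_diag !mxE ltn_ord andbT.
  by case: eqP => [<-|_]; rewrite ?ltn_ord ?mul1r ?mul0r.
have pid_diag : pid_mx k *m diag_mx d = diag_mx d.
  apply/matrixP => i j; rewrite mul_mx_diag !mxE.
  have [<-|ne] := eqVneq i j; first by rewrite eqxx; case: (i < k)%N; rewrite ?mul1r ?mul0r.
  by rewrite (_ : (i == j :> nat) = false) ?mul0r //; apply: negPf.
have def_DR0 : diag_mx d *m R0 = pid_mx k *m invmx L *m M.
  by rewrite defM !mulmxA mulmxKV // defD mulmxA mul_pid_mx !minnn pid_diag.
exists d, R0; split=> // v; split.
  by rewrite defM defD !mulmxA -(mulmxA _ (diag_mx d)) => /rowspan_mulmx.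
by rewrite def_DR0 => /rowspan_mulmx.
Qed.

Lemma map_mx_intr_inj (R : numDomainType) m n :
  injective (map_mx (intr : int -> R) : 'M_(m, n) -> 'M_(m, n)).
Proof.
move=> A B /matrixP eqAB; apply/matrixP => i j.
by have := eqAB i j; rewrite !mxE => /intr_inj.
Qed.

Lemma int_small_cube (a : int) : `|a| <= 1 -> a * a * a = a.
Proof. by case: a => [[|[]]|[]]. Qed.

Lemma diag_rowspan_saturatedP n (d : 'rV[int]_n) (R0 : 'M[int]_n) :
  R0 \in unitmx ->
  (forall v, rowspan (map_mx (intr : int -> rat) (diag_mx d *m R0)) (map_mx intr v) ->
             rowspan (diag_mx d *m R0) v)
  <-> (forall j, `|d 0 j| <= 1).
Proof.
move=> uR0; have uR0Q : map_mx (intr : int -> rat) R0 \in unitmx.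
  by rewrite unitmxE det_map_mx rmorph_unit // -unitmxE.
split=> [saturated j | small v [c Ev]].
  have [->//|nz] := eqVneq (d 0 j) 0.
  have [c] : rowspan (diag_mx d *m R0) (row j R0).
    apply: saturated; exists (((d 0 j)%:~R)^-1 *: delta_mx 0 j).
    rewrite map_mxM mulmxA -scalemxAl -rowE map_diag_mx row_diag_mx scalerA mxE.
    by rewrite mulVf ?intr_eq0 // scale1r -rowE map_row.
  rewrite rowE mulmxA => /(can_inj (mulmxK uR0))/matrixP/(_ 0 j).
  rewrite mul_mx_diag !mxE !eqxx => /esym/(congr1 absz)/eqP.
  by rewrite abszM muln_eq1 => /andP[_ /eqP dj1]; rewrite -abszE dj1.
(* D^3 = D lets us write v = (v U^-1 D) (D U) with integral coefficients. *)
have cube : diag_mx d *m diag_mx d *m diag_mx d = diag_mx d.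
  by rewrite !mulmx_diag; congr diag_mx; apply/rowP => j; rewrite !mxE int_small_cube.
have Ew : map_mx intr (v *m invmx R0) = c *m map_mx (intr : int -> rat) (diag_mx d).
  by rewrite map_mxM Ev map_mxM mulmxA -mulmxA -map_mxM mulmxV // map_mx1 mulmx1.
have wDD : v *m invmx R0 *m (diag_mx d *m diag_mx d) = v *m invmx R0.
  by apply: (@map_mx_intr_inj rat); rewrite map_mxM Ew -mulmxA -map_mxM mulmxA cube.
exists (v *m invmx R0 *m diag_mx d).
by rewrite mulmxA -(mulmxA (v *m invmx R0)) wDD mulmxKV.
Qed.

Lemma intr_small_eq0 (K : nzRingType) (a : int) :
  `|a| <= 1 -> (a%:~R == 0 :> K) = (a == 0).
Proof. by case: a => [[|[]]|[]] //= _; rewrite ?rmorph0 ?eqxx ?mulr1n ?oppr_eq0 ?oner_eq0. Qed.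

Lemma Fp_intr_eq0 p (a : int) : prime p -> (p %| absz a)%N -> (a%:~R : 'F_p) = 0.
Proof.
move=> p_pr; rewrite -[(p %| _)%N]/(p%:Z %| a)%Z => /dvdzP[q ->].
by rewrite intrM -pmulrn pchar_Fp_0 // mulr0.
Qed.

Lemma intr_support_card_indepP n (d : 'rV[int]_n) :
  (forall K : fieldType, #|[set j | (d 0 j)%:~R != 0 :> K]| = #|[set j | d 0 j != 0]|)
  <-> (forall j, `|d 0 j| <= 1).
Proof.
split=> [indep j | small K]; last first.
  by apply: eq_card => j; rewrite !inE intr_small_eq0.
rewrite leNgt; apply/negP => dj_gt1.
have dj_gt1N : (1 < absz (d 0%R j))%N by rewrite -ltz_nat abszE.
pose p := pdiv (absz (d 0%R j)); have p_pr : prime p by apply: pdiv_prime.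
have dj0 : (d 0 j)%:~R = 0 :> 'F_p by apply: Fp_intr_eq0 => //; apply: pdiv_dvd.
have: [set l | (d 0 l)%:~R != 0 :> 'F_p] \subset [set l | d 0 l != 0] :\ j.
  apply/subsetP => l; rewrite !inE => nz_l; apply/andP; split.
    by apply: contra_neq nz_l => ->.
  by apply: contra_neq nz_l => ->; rewrite rmorph0.
move/subset_leq_card; rewrite indep (cardsD1 j) inE.
have -> : d 0 j != 0 by rewrite -normr_gt0 (lt_trans _ dj_gt1).
by rewrite add1n ltnn.
Qed.

Lemma has_dim_unique (K : fieldType) n (P : 'M[K]_n -> Prop) d d' :
  has_dim P d -> has_dim P d' -> d = d'.
Proof.
move=> [U [PU <-]] [U' [PU' <-]]; congr (\dim _); apply/vspaceP => A.
by apply/idP/idP => [/PU/PU'|/PU'/PU].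
Qed.

Lemma vec_mx_mulmx_sum_row (R : pzRingType) m n k (c : 'rV[R]_k) (M : 'M_(k, m * n)) :
  vec_mx (c *m M) = \sum_i c 0 i *: vec_mx (row i M).
Proof. by rewrite mulmx_sum_row linear_sum; apply: eq_bigr => i _; rewrite linearZ. Qed.

Lemma has_dim_rowspan (K : fieldType) n k (M : 'M[K]_(k, n * n)) (P : 'M[K]_n -> Prop) :
  (forall A, P A <-> rowspan M (mxvec A)) -> has_dim P (\rank M).
Proof.
move=> PM; pose B := row_base M; pose X := [tuple vec_mx (row i B) | i < \rank M].
have XE (i : 'I_(\rank M)) : X`_i = vec_mx (row i B) by rewrite -tnth_nth tnth_mktuple.
have spanE v : rowspan M v <-> rowspan B v.
  by split=> /submxP vM; apply/submxP; rewrite /B ?eq_row_base // -(eq_row_base M).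
have sumE (c : 'I_(\rank M) -> K) : \sum_i c i *: X`_i = vec_mx (\row_i c i *m B).
  by rewrite vec_mx_mulmx_sum_row; apply: eq_bigr => i _; rewrite XE mxE.
have freeX : free X.
  apply/freeP => c; rewrite sumE => /(canRL vec_mxK); rewrite linear0.
  rewrite -(mul0mx _ B) => /(row_free_inj (row_base_free M))/matrixP c0 i.
  by have := c0 0 i; rewrite !mxE.
exists <<X>>%VS; split; last by rewrite (eqP freeX) size_tuple.
move=> A; rewrite PM spanE; split.
  by move/coord_span; rewrite sumE => ->; rewrite vec_mxK; exists (\row_i coord X i A).
move=> [c /(canRL mxvecK)->]; rewrite vec_mx_mulmx_sum_row; apply: rpred_sum => i _.
by rewrite -XE; apply/rpredZ/memv_span/mem_nth; rewrite size_tuple.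
Qed.

Lemma has_dim_rowspanE (K : fieldType) n k (M : 'M[K]_(k, n * n)) (P : 'M[K]_n -> Prop) e :
  (forall A, P A <-> rowspan M (mxvec A)) -> has_dim P e <-> e = \rank M.
Proof.
move=> /has_dim_rowspan dimP.
by split=> [/has_dim_unique/(_ dimP) | ->].
Qed.

Lemma mxrank_diag (F : fieldType) n (d : 'rV[F]_n) :
  \rank (diag_mx d) = #|[set j | d 0 j != 0]|.
Proof.
rewrite -sum1dep_card; elim: n d => [|n IHn] d; first by rewrite flatmx0 mxrank0 big_ord0.
move: d; change (forall d : 'rV[F]_(1 + n),
  \rank (diag_mx d) = (\sum_(j < 1 + n | d 0%R j != 0%R) 1)%N) => d.
rewrite -[d]hsubmxK diag_mx_row rank_diag_block_mx IHn big_split_ord /=.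
congr (_ + _)%N; last by apply: eq_bigl => j; rewrite row_mxEr.
rewrite big_mkcond big_ord1 row_mxEl [diag_mx _]mx11_scalar mxE eqxx mulr1n.
have [->|nz] := eqVneq (lsubmx d 0 0) 0; first by rewrite raddf0 mxrank0.
by rewrite /= -scalemx1 mxrank_scale_nz // mxrank1.
Qed.

Lemma mxrank_map_diag_unit (K : fieldType) n (d : 'rV[int]_n) (R0 : 'M[int]_n) :
  R0 \in unitmx ->
  \rank (map_mx (intr : int -> K) (diag_mx d *m R0)) = #|[set j | (d 0 j)%:~R != 0 :> K]|.
Proof.
move=> uR0; have uR0K : map_mx (intr : int -> K) R0 \in unitmx.
  by rewrite unitmxE det_map_mx rmorph_unit // -unitmxE.
rewrite map_mxM mxrankMfree ?row_free_unit // map_diag_mx mxrank_diag.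
by apply: eq_card => j; rewrite !inE mxE.
Qed.

Lemma in_subalg_mono (R : comNzRingType) n (G G' : 'M[R]_n -> Prop) A :
  (forall B, G B -> G' B) -> in_subalg G A -> in_subalg G' A.
Proof. by move=> GG'; elim=> *; [apply/subalg_gen/GG'|constructor..]. Qed.

Section SubalgebraCombinations.
Variables (R : comNzRingType) (n : nat) (G : 'M[R]_n -> Prop).

Lemma in_subalg0 : in_subalg G 0.
Proof. by rewrite -(scale0r 1%:M); apply/subalg_scale/subalg_one. Qed.

Lemma in_subalg_sum k (a : 'I_k -> R) (F : 'I_k -> 'M_n) :
  (forall i, in_subalg G (F i)) -> in_subalg G (\sum_i a i *: F i).
Proof.
move=> GF; apply: big_ind => [||i _]; last exact/subalg_scale/GF.
  exact: in_subalg0.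
exact: subalg_add.
Qed.

End SubalgebraCombinations.

Section IntegralGenerators.
Variables (n : nat) (G : 'M[int]_n -> Prop).

Definition map_gens (R : comNzRingType) (A : 'M[R]_n) : Prop :=
  exists2 B, G B & A = map_mx intr B.

Lemma map_in_subalg (R : comNzRingType) B :
  in_subalg G B -> in_subalg (@map_gens R) (map_mx intr B).
Proof.
elim=> {B} [B GB| |A B _ IHA _ IHB|a A _ IHA|A B _ IHA _ IHB].
- by apply: subalg_gen; exists B.
- by rewrite map_scalar_mx rmorph1; apply: subalg_one.
- by rewrite map_mxD; apply: subalg_add.
- by rewrite map_mxZ; apply: subalg_scale.
- by rewrite map_mxM; apply: subalg_mul.
Qed.

Lemma in_subalg_int_submod : int_submod (fun v => in_subalg G (vec_mx v)).
Proof.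
split=> [|u v|a v]; rewrite ?linear0 ?linearD ?linearZ; first exact: in_subalg0.
  exact: subalg_add.
exact: subalg_scale.
Qed.

Variables (k : nat) (M : 'M[int]_(k, n * n)).
Hypothesis in_subalgE : forall v, in_subalg G (vec_mx v) <-> rowspan M v.

Lemma rowspan_map_in_subalg (R : comNzRingType) B :
  in_subalg G B -> rowspan (map_mx (intr : int -> R) M) (mxvec (map_mx intr B)).
Proof.
rewrite -[B]mxvecK => /in_subalgE[c ->]; rewrite map_vec_mx vec_mxK.
by exists (map_mx intr c); rewrite map_mxM.
Qed.

Lemma in_map_gens_subalgP (R : comNzRingType) (A : 'M[R]_n) :
  in_subalg (@map_gens R) A <-> rowspan (map_mx intr M) (mxvec A).
Proof.
have row_map i :
    vec_mx (row i (map_mx intr M)) = map_mx (intr : int -> R) (vec_mx (row i M)).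
  by rewrite map_vec_mx map_row.
have row_in i : in_subalg G (vec_mx (row i M)).
  by apply/in_subalgE; exists (delta_mx 0 i); rewrite -rowE.
split; last first.
  move=> [c /(canRL mxvecK)->]; rewrite vec_mx_mulmx_sum_row.
  by apply: in_subalg_sum => i; rewrite row_map; apply: map_in_subalg.
elim=> {A} [_ [B GB ->]| |A B _ IHA _ IHB|a A _ IHA|
            A B _ [a /(canRL mxvecK)->] _ [b /(canRL mxvecK)->]].
- exact/rowspan_map_in_subalg/subalg_gen.
- by rewrite -(map_mx1 intr); exact/rowspan_map_in_subalg/subalg_one.
- by rewrite linearD /=; apply: rowspanD.
- by rewrite linearZ /=; apply: rowspanZ.
rewrite !vec_mx_mulmx_sum_row mulmx_suml linear_sum; apply: rowspan_sum => i _ /=.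
rewrite -scalemxAl linearZ; apply: rowspanZ.
rewrite mulmx_sumr linear_sum; apply: rowspan_sum => j _ /=.
rewrite -scalemxAr linearZ; apply: rowspanZ.
by rewrite !row_map -map_mxM; apply/rowspan_map_in_subalg/subalg_mul.
Qed.

End IntegralGenerators.

Section RowSpanFamily.
Variables (n k : nat) (T : forall R : comNzRingType, 'M[R]_n -> Prop).
Arguments T : clear implicits.
Variable N : 'M[int]_(k, n * n).
Hypothesis TN : forall (R : comNzRingType) A, T R A <-> rowspan (map_mx intr N) (mxvec A).

Lemma family_saturatedE :
  (forall A : 'M[rat]_n,
      (T rat A /\ exists B, A = map_mx intr B) <-> (exists B, T int B /\ A = map_mx intr B))
  <-> (forall v, rowspan (map_mx (intr : int -> rat) N) (map_mx intr v) -> rowspan N v).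
Proof.
have mapN : map_mx intr N = N by apply/matrixP => i j; rewrite mxE intz.
have TZ B : T int B <-> rowspan N (mxvec B) by rewrite TN mapN.
split=> [saturated v NQv | saturated A].
  have [|B [/TZ NB]] := (saturated (map_mx intr (vec_mx v))).1.
    by split; [apply/TN; rewrite -map_mxvec vec_mxK | exists (vec_mx v)].
  by move=> /map_mx_intr_inj defB; rewrite -defB vec_mxK in NB.
split=> [[TA [B defA]] | [B [/TZ [c NB] ->]]].
  by exists B; split=> //; apply/TZ/saturated; rewrite map_mxvec -defA; apply/TN.
split; last by exists B.
by apply/TN; exists (map_mx intr c); rewrite -map_mxvec NB map_mxM.
Qed.

Lemma family_dim_indepE :
  (forall (K : fieldType) e, has_dim (T Ccomplex) e <-> has_dim (T K) e)
  <-> (forall K : fieldType,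
         \rank (map_mx (intr : int -> K) N) = \rank (map_mx (intr : int -> Ccomplex) N)).
Proof.
have dimE (K : fieldType) e : has_dim (T K) e <-> e = \rank (map_mx (intr : int -> K) N).
  exact: has_dim_rowspanE (@TN K).
split=> indep K; last by move=> e; rewrite !dimE indep.
by apply/esym/(dimE K)/(indep K)/dimE.
Qed.

End RowSpanFamily.

Lemma map_Estar (R : comNzRingType) (X : finType) (x : X) s :
  Estar R x s = map_mx intr (Estar int x s).
Proof. by apply/matrixP => i j; rewrite !mxE rmorph_nat. Qed.

Lemma map_adjmx (R : comNzRingType) (X : finType) (s : {set X * X}) :
  adjmx R s = map_mx intr (adjmx int s).
Proof. by apply/matrixP => i j; rewrite !mxE rmorph_nat. Qed.

Lemma terw_gens_mapE (R : comNzRingType) (X : finType) S (x : X) A :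
  terw_gens R S x A <-> map_gens (terw_gens int S x) A.
Proof.
split=> [[s [t [u [sS tS uS ->]]]] | [_ [s [t [u [sS tS uS ->]]]] ->]].
  exists (Estar int x s *m adjmx int t *m Estar int x u); first by exists s, t, u.
  by rewrite !map_mxM -map_adjmx -!map_Estar.
by exists s, t, u; rewrite !map_mxM -map_adjmx -!map_Estar.
Qed.

Theorem proposition2p1 (X : finType) (S : {set {set X * X}}) (x : X) :
  is_assoc_scheme S ->
  ((forall A : 'M[rat]_#|X|,
      (terwilliger rat S x A /\ exists B : 'M[int]_#|X|, A = map_mx intr B)
      <-> (exists B : 'M[int]_#|X|, terwilliger int S x B /\ A = map_mx intr B))
   <->
   (forall (K : fieldType) (d : nat),
      has_dim (terwilliger Ccomplex S x) d <-> has_dim (terwilliger K S x) d)).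
Proof.
move=> _.
have [k [M HM]] := int_submod_fin_gen (in_subalg_int_submod (terw_gens int S x)).
have [d [R0 [uR0 HR]]] := int_rowspan_smith M.
have TN (R : comNzRingType) A :
    terwilliger R S x A <-> rowspan (map_mx intr (diag_mx d *m R0)) (mxvec A).
  rewrite -(in_map_gens_subalgP (fun v => iff_trans (HM v) (HR v))).
  by split; apply: in_subalg_mono => B /terw_gens_mapE.
apply: (iff_trans (family_saturatedE TN)).
apply: (iff_trans (diag_rowspan_saturatedP d uR0)); apply: iff_sym.
apply: (iff_trans (family_dim_indepE TN)).
rewrite -intr_support_card_indepP.
have suppC : #|[set j | (d 0 j)%:~R != 0 :> Ccomplex]| = #|[set j | d 0 j != 0]|.
  by apply: eq_card => j; rewrite !inE intr_eq0.
by split=> indep K; have := indep K; rewrite !mxrank_map_diag_unit // suppC.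
Qed.
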